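(* Let $(\mathbf{x}_i,y_i)$, $i=1,\dots,n$, be training samples with $\mathbf{x}_i\in\mathbb{R}^d$, $y_i\in\{1,\dots,L\}$, let $\mathbf{x}^*_{i'}\in\mathbb{R}^d$, $i'=1,\dots,m$, be universum samples, and let $C,C^*>0$, $\Delta\ge0$. Problem (MU) is $$\min_{\mathbf{w}_1,\dots,\mathbf{w}_L,\boldsymbol\xi,\boldsymbol\zeta}\ \tfrac12\sum_{l=1}^L\|\mathbf{w}_l\|_2^2+C\sum_{i=1}^n\xi_i+C^*\sum_{i'=1}^m\sum_{k=1}^L\zeta_{i'k}$$ subject to $(\mathbf{w}_{y_i}-\mathbf{w}_l)^\top\mathbf{x}_i\ge 1-\delta_{il}-\xi_i$ for all $i\le n$, $l\le L$, and $\big|\mathbf{w}_k^\top\mathbf{x}^*_{i'}-\max_{l}\mathbf{w}_l^\top\mathbf{x}^*_{i'}\big|\le\Delta+\zeta_{i'k}$, $\zeta_{i'k}\ge0$ for all $i'\le m$, $k\le L$. Problem (CS) is the Crammer–Singer multiclass SVM on the augmented data set of $n+mL$ samples, where samples $i=1,\dots,n$ are the training samples with $C_i=C$, $e_{il}=1-\delta_{il}$, and for $i'=1,\dots,m$, $k=1,\dots,L$, the sample with index $i=n+(i'-1)L+k$ is $(\mathbf{x}_i,y_i)=(\mathbf{x}^*_{i'},k)$ with $C_i=C^*$ and $e_{il}=-\Delta(1-\delta_{il})$: $$\min_{\mathbf{w}_1,\dots,\mathbf{w}_L,\boldsymbol\xi}\ \tfrac12\sum_{l}\|\mathbf{w}_l\|_2^2+\sum_{i=1}^{n+mL}C_i\xi_i\quad\text{s.t.}\quad(\mathbf{w}_{y_i}-\mathbf{w}_l)^\top\mathbf{x}_i\ge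 e_{il}-\xi_i\ \ \forall i,l.$$ Then (MU) and (CS) are equivalent: for every fixed $(\mathbf{w}_1,\dots,\mathbf{w}_L)$, each universum sample contributes the same amount to the objective of both problems after minimizing over the slack variables, so the two problems have the same objective as a function of $(\mathbf{w}_1,\dots,\mathbf{w}_L)$ and hence the same optimal solutions in $(\mathbf{w}_1,\dots,\mathbf{w}_L)$.
   Context: $\delta_{il}=1$ if $y_i=l$ and $0$ otherwise (with $y_i$ the label of the indexed sample). *)

From mathcomp Require Import all_boot all_order all_algebra.
Set Implicit Arguments. Unset Strict Implicit. Unset Printing Implicit Defensive.
Import Order.TTheory GRing.Theory Num.Theory.
Local Open Scope ring_scope.

Section Defs.
Variable R : realFieldType.
Variables (d L : nat).

Definition dotp (u v : 'rV[R]_d) : R := \sum_(j < d) u 0 j * v 0 j.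

Definition kdelta (y l : 'I_L) : R := (y == l)%:R.

(* Maximum of a family indexed by the L classes (L >= 1 whenever it is used). *)
Definition maxL (f : 'I_L -> R) : R :=
  \big[Num.max/head 0 [seq f l | l <- enum 'I_L]]_(l < L) f l.

Definition reg (W : 'I_L -> 'rV[R]_d) : R :=
  2^-1 * \sum_(l < L) \sum_(j < d) (W l 0 j) ^+ 2.

Definition mu_feas (n m : nat) (x : 'I_n -> 'rV[R]_d) (y : 'I_n -> 'I_L)
  (xs : 'I_m -> 'rV[R]_d) (Delta : R)
  (W : 'I_L -> 'rV[R]_d) (xi : 'I_n -> R) (zeta : 'I_m -> 'I_L -> R) : Prop :=
  (forall (i : 'I_n) (l : 'I_L),
      1 - kdelta (y i) l - xi i <= dotp (W (y i) - W l) (x i)) /\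
  (forall (i' : 'I_m) (k : 'I_L),
      `|dotp (W k) (xs i') - maxL (fun l => dotp (W l) (xs i'))| <= Delta + zeta i' k
      /\ 0 <= zeta i' k).

Definition mu_obj (n m : nat) (C Cs : R)
  (W : 'I_L -> 'rV[R]_d) (xi : 'I_n -> R) (zeta : 'I_m -> 'I_L -> R) : R :=
  reg W + C * \sum_(i < n) xi i + Cs * \sum_(i' < m) \sum_(k < L) zeta i' k.

Definition cs_feas (I : finType) (X : I -> 'rV[R]_d) (Y : I -> 'I_L)
  (e : I -> 'I_L -> R) (W : 'I_L -> 'rV[R]_d) (xi : I -> R) : Prop :=
  forall (i : I) (l : 'I_L), e i l - xi i <= dotp (W (Y i) - W l) (X i).

Definition cs_obj (I : finType) (Cw : I -> R)
  (W : 'I_L -> 'rV[R]_d) (xi : I -> R) : R :=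
  reg W + \sum_(i : I) Cw i * xi i.

(* ---------------- Augmented data set for (CS) ----------------
   Index set: inl i  <-> sample i (1 <= i <= n);
              inr (i', k) <-> sample n + (i'-1) L + k. *)
Definition aug_idx (n m : nat) : finType := ('I_n + ('I_m * 'I_L))%type.

Definition augX (n m : nat) (x : 'I_n -> 'rV[R]_d) (xs : 'I_m -> 'rV[R]_d)
  (i : aug_idx n m) : 'rV[R]_d :=
  match i with inl i0 => x i0 | inr p => xs p.1 end.

Definition augY (n m : nat) (y : 'I_n -> 'I_L) (i : aug_idx n m) : 'I_L :=
  match i with inl i0 => y i0 | inr p => p.2 end.

Definition augC (n m : nat) (C Cs : R) (i : aug_idx n m) : R :=
  match i with inl _ => C | inr _ => Cs end.

Definition auge (n m : nat) (y : 'I_n -> 'I_L) (Delta : R)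
  (i : aug_idx n m) (l : 'I_L) : R :=
  match i with
  | inl i0 => 1 - kdelta (y i0) l
  | inr p => - Delta * (1 - kdelta p.2 l)
  end.

Definition is_min_value (T : Type) (P : T -> Prop) (f : T -> R) (v : R) : Prop :=
  (exists t, P t /\ f t = v) /\ (forall t, P t -> v <= f t).

End Defs.

(* For fixed W both problems split into independent one-dimensional problems,
   one per slack variable, each solved by the least feasible value.  The
   training slacks are literally the same in (MU) and (CS).  For a universum
   sample with scores a_l = w_l^T x*, the (MU) slack zeta_k is constrained by
   zeta_k >= 0 and zeta_k >= max_l a_l - a_k - Delta, while the (CS) slack of
   the augmented sample (x*, k) is constrained by xi >= 0 (from l = k) and
   xi >= a_l - a_k - Delta for l <> k; as Delta >= 0 both minima equal
   max(0, max_l a_l - a_k - Delta).  Equal partial minima in W then give the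
   same minimizers in W. *)

From mathcomp Require Import all_boot all_order all_algebra.
From mathcomp Require Import lra.
Set Implicit Arguments. Unset Strict Implicit. Unset Printing Implicit Defensive.
Import Order.TTheory GRing.Theory Num.Theory.
Local Open Scope ring_scope.

Section Preliminaries.
Variable R : realFieldType.

Lemma dotpBl (d : nat) (u v w : 'rV[R]_d) : dotp (u - v) w = dotp u w - dotp v w.
Proof. by rewrite /dotp -sumrB; apply: eq_bigr => j _; rewrite !mxE mulrBl. Qed.

Lemma le_maxL (L : nat) (f : 'I_L -> R) (l : 'I_L) : f l <= maxL f.
Proof. exact: le_bigmax. Qed.

(* [k] only witnesses that ['I_L] is nonempty: [maxL] is seeded with a value of [f]. *)
Lemma maxL_le (L : nat) (f : 'I_L -> R) (k : 'I_L) (t : R) :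
  (forall l, f l <= t) -> maxL f <= t.
Proof.
move=> f_le; apply: bigmax_le => [|l _]; last exact: f_le.
case E: (enum 'I_L) => [|l s] /=; last exact: f_le.
by have := mem_enum predT k; rewrite E.
Qed.

Lemma joint_minimizerE (Tw T : Type) (P : Tw -> T -> Prop) (f : Tw -> T -> R)
    (v : Tw -> R) (w : Tw) :
  (forall w, is_min_value (P w) (f w) (v w)) ->
  (exists t, P w t /\ forall w' t', P w' t' -> f w t <= f w' t') <->
  (forall w', v w <= v w').
Proof.
move=> min_v; split=> [[t [Pt t_opt]] w'|v_min].
  have [[t' [Pt' <-]] _] := min_v w'.
  by apply: le_trans (t_opt _ _ Pt'); have [_ ->] := min_v w.
have [[t [Pt ft]] _] := min_v w.
exists t; split=> // w' t' Pt'; rewrite ft.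
by apply: le_trans (v_min w') _; have [_ ->] := min_v w'.
Qed.

End Preliminaries.

Section CrammerSinger.
Variables (R : realFieldType) (d L : nat) (I : finType).
Variables (X : I -> 'rV[R]_d) (Y : I -> 'I_L) (e : I -> 'I_L -> R).
(* The constraint for [l = Y i] then forces [xi i >= 0], so seeding the
   maximum in [cs_slack] with [0] loses nothing. *)
Hypothesis e_ge0 : forall i, 0 <= e i (Y i).

Definition cs_slack (W : 'I_L -> 'rV[R]_d) (i : I) : R :=
  \big[Num.max/0]_(l < L) (e i l - dotp (W (Y i) - W l) (X i)).

Lemma cs_feasE (W : 'I_L -> 'rV[R]_d) (xi : I -> R) :
  cs_feas X Y e W xi <-> forall i, cs_slack W i <= xi i.
Proof.
split=> [feas i|slack_le i l].
  apply: bigmax_le => [|l _]; last by have := feas i l; lra.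
  have := feas i (Y i); rewrite dotpBl subrr; have := e_ge0 i; lra.
have := slack_le i; have := le_bigmax 0 (fun l => e i l - dotp (W (Y i) - W l) (X i)) l.
rewrite -/(cs_slack W i); lra.
Qed.

Lemma cs_obj_le (Cw : I -> R) (W : 'I_L -> 'rV[R]_d) (xi xi' : I -> R) :
  (forall i, 0 <= Cw i) -> (forall i, xi i <= xi' i) -> cs_obj Cw W xi <= cs_obj Cw W xi'.
Proof.
move=> Cw_ge0 xi_le; rewrite lerD2l; apply: ler_sum => i _.
exact: ler_wpM2l.
Qed.

Lemma cs_min_value (Cw : I -> R) (W : 'I_L -> 'rV[R]_d) : (forall i, 0 <= Cw i) ->
  is_min_value (cs_feas X Y e W) (cs_obj Cw W) (cs_obj Cw W (cs_slack W)).
Proof.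
move=> Cw_ge0; split; first by exists (cs_slack W); split=> //; apply/cs_feasE.
by move=> xi /cs_feasE slack_le; apply: cs_obj_le.
Qed.

End CrammerSinger.

Section UniversumSlack.
Variables (R : realFieldType) (L : nat).

Definition universum_slack (Delta : R) (a : 'I_L -> R) (k : 'I_L) : R :=
  Num.max 0 (`|a k - maxL a| - Delta).

Lemma universum_hingeE (Delta : R) (a : 'I_L -> R) (k : 'I_L) : 0 <= Delta ->
  \big[Num.max/0]_(l < L) (- Delta * (1 - kdelta R k l) - (a k - a l)) =
  universum_slack Delta a k.
Proof.
(* The term [l = k] is [0]; if [maxL a] is attained at [k], then [0 <= Delta]
   makes the right-hand side [0] as well. *)
move=> Delta_ge0; set hinge := \big[_/_]_(l < L) _.
have hinge_ge0 : 0 <= hinge by exact: bigmax_ge_id.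
have hinge_ge l : - Delta * (1 - kdelta R k l) - (a k - a l) <= hinge by exact: le_bigmax.
rewrite /universum_slack ler0_norm ?subr_le0 ?le_maxL // opprB.
apply/eqP; rewrite eq_le ge_max hinge_ge0 /=; apply/andP; split.
  apply: bigmax_le => [|l _]; first by rewrite le_max lexx.
  rewrite le_max; have := le_maxL a l; rewrite /kdelta.
  by case: eqP => [->|_] /=; rewrite ?mulr1n ?mulr0n => ?; apply/orP; [left|right]; lra.
suff : maxL a <= hinge + Delta + a k by lra.
apply: (maxL_le k) => l; have := hinge_ge l.
by rewrite /kdelta; case: eqP => [->|_] /=; rewrite ?mulr1n ?mulr0n; lra.
Qed.

End UniversumSlack.

Section MulticlassUniversum.
Variables (R : realFieldType) (d L n m : nat).
Variables (x : 'I_n -> 'rV[R]_d) (y : 'I_n -> 'I_L) (xs : 'I_m -> 'rV[R]_d).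
Variables (C Cs Delta : R).

Definition train_margin (i : 'I_n) (l : 'I_L) : R := 1 - kdelta R (y i) l.

Definition scores (W : 'I_L -> 'rV[R]_d) (v : 'rV[R]_d) (l : 'I_L) : R := dotp (W l) v.

Definition mu_slack (W : 'I_L -> 'rV[R]_d) (i' : 'I_m) (k : 'I_L) : R :=
  universum_slack Delta (scores W (xs i')) k.

Lemma mu_feasE (W : 'I_L -> 'rV[R]_d) (xi : 'I_n -> R) (zeta : 'I_m -> 'I_L -> R) :
  mu_feas x y xs Delta W xi zeta <->
  (forall i, cs_slack x y train_margin W i <= xi i) /\
  (forall i' k, mu_slack W i' k <= zeta i' k).
Proof.
have margin_ge0 i : 0 <= train_margin i (y i).
  by rewrite /train_margin /kdelta eqxx subrr.
have univE i' k : mu_slack W i' k <= zeta i' k <->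
    `|dotp (W k) (xs i') - maxL (fun l => dotp (W l) (xs i'))| <= Delta + zeta i' k
    /\ 0 <= zeta i' k.
  by rewrite /mu_slack /universum_slack ge_max lerBlDl andbC; split => /andP.
split=> [[/(cs_feasE x margin_ge0) train univ]|[train univ]].
  by split=> // i' k; apply/univE.
by split; [apply/(cs_feasE x margin_ge0) | move=> i' k; apply/univE].
Qed.

Lemma mu_obj_le (W : 'I_L -> 'rV[R]_d) (xi xi' : 'I_n -> R)
    (zeta zeta' : 'I_m -> 'I_L -> R) :
  0 <= C -> 0 <= Cs -> (forall i, xi i <= xi' i) ->
  (forall i' k, zeta i' k <= zeta' i' k) ->
  mu_obj C Cs W xi zeta <= mu_obj C Cs W xi' zeta'.
Proof.
move=> C_ge0 Cs_ge0 xi_le zeta_le; rewrite /mu_obj -!addrA lerD2l.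
apply: lerD; apply: ler_wpM2l => //; apply: ler_sum => i _ //.
exact: ler_sum.
Qed.

Lemma mu_min_value (W : 'I_L -> 'rV[R]_d) : 0 <= C -> 0 <= Cs ->
  is_min_value (fun p => mu_feas x y xs Delta W p.1 p.2)
    (fun p => mu_obj C Cs W p.1 p.2)
    (mu_obj C Cs W (cs_slack x y train_margin W) (mu_slack W)).
Proof.
move=> C_ge0 Cs_ge0; split.
  by exists (cs_slack x y train_margin W, mu_slack W); split=> //; apply/mu_feasE.
by move=> [xi zeta] /mu_feasE [train univ]; apply: mu_obj_le.
Qed.

Lemma cs_obj_aug (W : 'I_L -> 'rV[R]_d) (xi : aug_idx L n m -> R) :
  cs_obj (augC C Cs) W xi = mu_obj C Cs W (xi \o inl) (fun i' k => xi (inr (i', k))).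
Proof.
rewrite /cs_obj /mu_obj big_sumType pair_big /= addrA !mulr_sumr.
by congr (_ + _ + _); apply: eq_bigr => -[].
Qed.

Lemma cs_slack_universum (W : 'I_L -> 'rV[R]_d) (i' : 'I_m) (k : 'I_L) : 0 <= Delta ->
  cs_slack (augX x xs) (augY y) (auge y Delta) W (inr (i', k)) = mu_slack W i' k.
Proof.
move=> Delta_ge0; rewrite /mu_slack -universum_hingeE //.
by apply: eq_bigr => l _; rewrite /= dotpBl.
Qed.

Lemma mu_cs_min_value_eq (W : 'I_L -> 'rV[R]_d) : 0 <= Delta ->
  mu_obj C Cs W (cs_slack x y train_margin W) (mu_slack W) =
  cs_obj (augC C Cs) W (cs_slack (augX x xs) (augY y) (auge y Delta) W).
Proof.
move=> Delta_ge0; rewrite cs_obj_aug /mu_obj; congr (_ + _ + Cs * _).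
by apply: eq_bigr => i' _; apply: eq_bigr => k _; rewrite cs_slack_universum.
Qed.

End MulticlassUniversum.

Theorem proposition2 (R : realFieldType) (d L n m : nat)
  (x : 'I_n -> 'rV[R]_d) (y : 'I_n -> 'I_L) (xs : 'I_m -> 'rV[R]_d)
  (C Cs Delta : R) (hC : 0 < C) (hCs : 0 < Cs) (hDelta : 0 <= Delta) :
  (* for every fixed W, minimizing over the slacks gives the same value *)
  (forall W : 'I_L -> 'rV[R]_d, exists v : R,
     is_min_value
       (fun p : ('I_n -> R) * ('I_m -> 'I_L -> R) => mu_feas x y xs Delta W p.1 p.2)
       (fun p => mu_obj C Cs W p.1 p.2) v /\
     is_min_value
       (fun xi : aug_idx L n m -> R =>
          cs_feas (augX x xs) (@augY L n m y) (@auge R L n m y Delta) W xi)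
       (fun xi => cs_obj (@augC R L n m C Cs) W xi) v)
  /\
  (* hence the same optimal solutions in W *)
  (forall W : 'I_L -> 'rV[R]_d,
     (exists xi zeta, mu_feas x y xs Delta W xi zeta /\
        forall W' xi' zeta', mu_feas x y xs Delta W' xi' zeta' ->
          mu_obj C Cs W xi zeta <= mu_obj C Cs W' xi' zeta')
     <->
     (exists xi : aug_idx L n m -> R,
        cs_feas (augX x xs) (@augY L n m y) (@auge R L n m y Delta) W xi /\
        forall W' (xi' : aug_idx L n m -> R),
          cs_feas (augX x xs) (@augY L n m y) (@auge R L n m y Delta) W' xi' ->
          cs_obj (@augC R L n m C Cs) W xi <= cs_obj (@augC R L n m C Cs) W' xi')).
Proof.
pose v W := cs_obj (augC C Cs) W (cs_slack (augX x xs) (augY y) (auge y Delta) W).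
have mu_min W : is_min_value
    (fun p : ('I_n -> R) * ('I_m -> 'I_L -> R) => mu_feas x y xs Delta W p.1 p.2)
    (fun p => mu_obj C Cs W p.1 p.2) (v W).
  by rewrite /v -mu_cs_min_value_eq //; apply: mu_min_value; exact: ltW.
have cs_min W : is_min_value (cs_feas (augX x xs) (augY y) (auge y Delta) W)
    (cs_obj (augC C Cs) W) (v W).
  apply: cs_min_value => [[i|[i' k]]|[i|i']] /=.
  - by rewrite /kdelta eqxx subrr.
  - by rewrite /kdelta eqxx subrr mulr0.
  - exact: ltW.
  - exact: ltW.
split=> W; first by exists (v W).
rewrite (joint_minimizerE W cs_min) -(joint_minimizerE W mu_min).
split=> [[xi [zeta [feas opt]]]|[[xi zeta] [feas opt]]].
  by exists (xi, zeta); split=> // W' [xi' zeta']; apply: opt.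
by exists xi, zeta; split=> // W' xi' zeta' feas'; apply: (opt W' (xi', zeta')).
Qed.
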